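(* Let $U\subseteq\mathbb{R}^d$ be a U-shaped convex set, let $U^*$ be its projective dual, and let $\varepsilon>0$. Let $q$ be an (augmented) point of $\overline{\partial}U$ and let $p$ be its corresponding point on $\overline{\partial}U^*$. Then an (augmented) point $p'\in\overline{\partial}U^*$ lies in $\mathrm{Cap}_\varepsilon(p)(U^* )$ if and only if its corresponding point $q'\in\overline{\partial}U$ lies in $\mathrm{DCap}_\varepsilon(q)(U)$.
   Context: Coordinates in $\mathbb{R}^d$ are $(x_1,\dots,x_{d-1},y)$; the $y$-direction is called vertical (upward). A closed convex set $U$ is U-shaped if for every boundary point of $U$ the upward vertical ray from it lies in $U$. The lower boundary $\overline{\partial}U$ is the set of boundary points of $U$ having a non-vertical supporting hyperplane; its points are augmented: each point $q$ is paired with a non-vertical supporting hyperplane $h(q)$ of $U$ at $q$ (a point with several such hyperplanes gives several augmented points). For a point $q$, $q\pm\varepsilon$ denotes its vertical translate by $\pm\varepsilon$, and similarly for sets. The projective dual of a point $p=(p_1,\dots,p_d)$ is the non-vertical hyperplane $p^*: y=\sum_{j=1}^{d-1}p_jx_j-p_d$, and the dual of a non-vertical hyperplane is defined so that $p^{**}=p$. The dual $U^*$ is the intersection of the closed upper halfspaces of $q^*$ over all $q\in\overline{\partial}U$; it is U-shaped. The augmented point $q$ with hyperplane $h(q)$ corresponds to the augmented point $h(q)^*$ of $\overline{\partial}U^*$ with supporting hyperplane $q^*$; this is a bijection. The $\varepsilon$-cap $\mathrm{Cap}_\varepsilon(q)(U)$ is the set of augmented points of $\overline{\partial}U$ lying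 in the closed lower halfspace of $h(q)+\varepsilon$. The $\varepsilon$-dual cap $\mathrm{DCap}_\varepsilon(q)(U)$ is the set of augmented points $p\in\overline{\partial}U$ such that $q-\varepsilon$ lies in the closed lower halfspace of $h(p)$. *)

From HB Require Import structures.
From mathcomp Require Import all_boot all_order all_algebra.
From mathcomp Require Import all_classical all_reals topology normedtype.
Set Implicit Arguments. Unset Strict Implicit. Unset Printing Implicit Defensive.
Import Order.TTheory GRing.Theory Num.Theory.
Import numFieldNormedType.Exports.
Local Open Scope classical_set_scope.
Local Open Scope ring_scope.

(* Points of R^d with d = n+1 are pairs (x, y), x in R^n (row vector), y the
   vertical coordinate.  A non-vertical hyperplane  y = a.x + b  is the pair (a, b). *)
Section Defs.
Variables (R : realType) (n : nat).

Definition pt := ('rV[R]_n * R)%type.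
Definition hyp := ('rV[R]_n * R)%type.

Definition dotv (a x : 'rV[R]_n) : R := \sum_(i < n) a ord0 i * x ord0 i.

Definition upper_half (h : hyp) : set pt := [set p | dotv h.1 p.1 + h.2 <= p.2].
Definition lower_half (h : hyp) : set pt := [set p | p.2 <= dotv h.1 p.1 + h.2].
Definition on_hyp (h : hyp) (p : pt) : Prop := p.2 = dotv h.1 p.1 + h.2.

Definition vshift (p : pt) (e : R) : pt := (p.1, p.2 + e).
Definition hshift (h : hyp) (e : R) : hyp := (h.1, h.2 + e).

Definition boundary (U : set pt) : set pt := closure U `\` interior U.

Definition convex_set (U : set pt) : Prop :=
  forall u v, U u -> U v -> forall t : R, 0 <= t <= 1 ->
    U (t *: u.1 + (1 - t) *: v.1, t * u.2 + (1 - t) * v.2).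

Definition U_shaped (U : set pt) : Prop :=
  [/\ closed U, convex_set U &
      forall q, boundary U q -> forall t : R, 0 <= t -> U (vshift q t)].

Definition supporting (U : set pt) (q : pt) (h : hyp) : Prop :=
  on_hyp h q /\ (U `<=` upper_half h \/ U `<=` lower_half h).

Definition aug_lower_boundary (U : set pt) : set (pt * hyp) :=
  [set qh | boundary U qh.1 /\ supporting U qh.1 qh.2].

(* projective duality: p = (p', p_d)  |->  y = p'.x - p_d, and back, so p** = p *)
Definition dual_pt (p : pt) : hyp := (p.1, - p.2).
Definition dual_hyp (h : hyp) : pt := (h.1, - h.2).

Definition dual_set (U : set pt) : set pt :=
  [set z | forall qh, aug_lower_boundary U qh -> upper_half (dual_pt qh.1) z].

Definition corr (qh : pt * hyp) : pt * hyp := (dual_hyp qh.2, dual_pt qh.1).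

Definition Cap (e : R) (qh : pt * hyp) (U : set pt) : set (pt * hyp) :=
  [set ph | aug_lower_boundary U ph /\ lower_half (hshift qh.2 e) ph.1].

Definition DCap (e : R) (qh : pt * hyp) (U : set pt) : set (pt * hyp) :=
  [set ph | aug_lower_boundary U ph /\ lower_half ph.2 (vshift qh.1 (- e))].

End Defs.

From HB Require Import structures.
From mathcomp Require Import all_boot all_order all_algebra.
From mathcomp Require Import all_classical all_reals topology normedtype.
From mathcomp Require Import lra.
Import Order.TTheory GRing.Theory Num.Theory.
Local Open Scope classical_set_scope.
Local Open Scope ring_scope.

(* Duality preserves above/below incidence up to sign: for points p, q the
   inequality "p lies below q* + e" reads p_d <= <q', p'> - q_d + e, and
   "q - e lies below p*" reads q_d - e <= <p', q'> - p_d.  These are the same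
   inequality because the pairing is symmetric, so the two caps correspond
   membership by membership. *)

Section CapDuality.
Variables (R : realType) (n : nat).
Implicit Types (p q : pt R n) (e : R).

Lemma dotvC (a x : 'rV[R]_n) : dotv a x = dotv x a.
Proof. by apply: eq_bigr => i _; rewrite mulrC. Qed.

Lemma lower_half_dual_sym p q e :
  lower_half (hshift (dual_pt q) e) p <-> lower_half (dual_pt p) (vshift q (- e)).
Proof. by rewrite /lower_half /hshift /vshift /dual_pt /= dotvC; split => ?; lra. Qed.

End CapDuality.

Theorem lemma6 (R : realType) (n : nat) (U : set (pt R n)) (e : R)
  (q : pt R n * hyp R n) (p' : pt R n * hyp R n) :
  U_shaped U -> 0 < e ->
  aug_lower_boundary U q ->
  aug_lower_boundary (dual_set U) p' ->
  aug_lower_boundary U (corr p') ->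
  (Cap e (corr q) (dual_set U) p' <-> DCap e q U (corr p')).
Proof.
move=> _ _ _ p'_bd corr_p'_bd.
rewrite /Cap /DCap /= lower_half_dual_sym.
by split=> -[_ below].
Qed.
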